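(* Let $\Bbbk$ be an algebraically closed field and $A$ a basic finite-dimensional unital $\Bbbk$-algebra. Let $\mathrm{F}$ be a selfadjoint endofunctor of $A\text{-}\mathrm{mod}$. If $\mathrm{F}^k=\mathrm{F}\circ\cdots\circ\mathrm{F}$ ($k$ factors) is zero for some $k\in\mathbb{N}$, then $\mathrm{F}$ is zero.
   Context: $A\text{-}\mathrm{mod}$ is the category of finite-dimensional left $A$-modules; all functors are additive and $\Bbbk$-linear. A functor is selfadjoint if it is left adjoint to itself (equivalently right adjoint to itself). ''Zero'' means isomorphic to the zero functor; $\mathbb{N}$ denotes the positive integers. *)

(* Concrete model of A-mod for a finite-dimensional unital
   k-algebra A (an falgType k): a finite-dimensional left A-module is a
   representation  act : A -> 'M[k]_n  (column-vector convention, a.v = act a *m v),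
   a morphism M -> N is an (adim N x adim M) matrix intertwining the actions. *)
From HB Require Import structures.
From mathcomp Require Import all_boot all_order all_algebra all_field.
Set Implicit Arguments. Unset Strict Implicit. Unset Printing Implicit Defensive.
Import GRing.Theory.
Local Open Scope ring_scope.

Section AMod.
Variables (k : fieldType) (A : falgType k).

Record amod := AMod {
  adim : nat;
  act : A -> 'M[k]_adim;
  act_linear : forall (c : k) (a b : A), act (c *: a + b) = c *: act a + act b;
  act1 : act 1 = 1%:M;
  actM : forall a b : A, act (a * b) = act a *m act b
}.

Definition is_hom (M N : amod) (f : 'M[k]_(adim N, adim M)) : Prop :=
  forall a : A, f *m act M a = act N a *m f.
Arguments is_hom : clear implicits.

Record endofunctor := EndoFunctor {
  Fobj : amod -> amod;
  Fmor : forall M N : amod,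
      'M[k]_(adim N, adim M) -> 'M[k]_(adim (Fobj N), adim (Fobj M));
  Fmor_hom : forall M N f, is_hom M N f -> is_hom (Fobj M) (Fobj N) (Fmor f);
  Fmor_id : forall M, Fmor (1%:M : 'M[k]_(adim M)) = 1%:M;
  Fmor_comp : forall M N P (f : 'M[k]_(adim N, adim M)) (g : 'M[k]_(adim P, adim N)),
      is_hom M N f -> is_hom N P g -> Fmor (g *m f) = Fmor g *m Fmor f;
  Fmor_linear : forall M N (c : k) (f g : 'M[k]_(adim N, adim M)),
      is_hom M N f -> is_hom M N g -> Fmor (c *: f + g) = c *: Fmor f + Fmor g
}.

(* F is left adjoint to itself: bijections Hom(F M, N) ~ Hom(M, F N),
   natural in M and N. *)
Definition selfadjoint (F : endofunctor) : Prop :=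
  exists (phi : forall M N : amod,
                'M[k]_(adim N, adim (Fobj F M)) -> 'M[k]_(adim (Fobj F N), adim M))
         (psi : forall M N : amod,
                'M[k]_(adim (Fobj F N), adim M) -> 'M[k]_(adim N, adim (Fobj F M))),
    [/\ (forall M N f, is_hom (Fobj F M) N f -> is_hom M (Fobj F N) (phi M N f)),
        (forall M N g, is_hom M (Fobj F N) g -> is_hom (Fobj F M) N (psi M N g)),
        (forall M N f, is_hom (Fobj F M) N f -> psi M N (phi M N f) = f),
        (forall M N g, is_hom M (Fobj F N) g -> phi M N (psi M N g) = g) &
        (forall M M' N N' (h : 'M[k]_(adim M, adim M')) (g : 'M[k]_(adim N', adim N))
                (f : 'M[k]_(adim N, adim (Fobj F M))),
            is_hom M' M h -> is_hom N N' g -> is_hom (Fobj F M) N f ->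
            phi M' N' (g *m f *m Fmor F h) = Fmor F g *m phi M N f *m h)].

(* an object is zero iff it is the zero vector space; a functor is
   (isomorphic to) zero iff all its values on objects are zero *)
Definition zero_functor (F : endofunctor) : Prop :=
  forall M : amod, adim (Fobj F M) = 0%N.

Definition power_zero (F : endofunctor) (n : nat) : Prop :=
  forall M : amod, adim (iter n (Fobj F) M) = 0%N.

(* simple modules: nonzero, and the only submodules (A-stable column spaces
   of U) are 0 and everything *)
Definition simple_mod (M : amod) : Prop :=
  (0 < adim M)%N /\
  forall U : 'M[k]_(adim M),
    (forall a : A, ((act M a *m U)^T <= U^T)%MS) ->
    \rank U = 0%N \/ \rank U = adim M.

(* A basic (over an algebraically closed field): A / rad A is a product of
   copies of k, i.e. every simple A-module is one-dimensional *)
Definition basic : Prop := forall M : amod, simple_mod M -> adim M = 1%N.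

End AMod.

(* If F M is nonzero, the adjunction identifies Hom(F M, F M) with
   Hom(M, F (F M)); the former contains the two distinct maps 1 and 0, so
   F (F M) cannot vanish.  Iterating, F M <> 0 forces F^n M <> 0 for every
   n >= 1, contradicting nilpotence. *)
From mathcomp Require Import all_boot all_order all_algebra all_field.
Import GRing.Theory.
Local Open Scope ring_scope.

Lemma flatmx_eq {R : nmodType} {m n} (m0 : m = 0%N) (X Y : 'M[R]_(m, n)) :
  X = Y.
Proof. by subst m; rewrite (flatmx0 X) (flatmx0 Y). Qed.

Section SelfadjointNonvanishing.
Variables (k : fieldType) (A : falgType k) (F : endofunctor A).
Hypothesis F_selfadjoint : selfadjoint F.

Lemma selfadjoint_FFobj_neq0 (M : amod A) :
  adim (Fobj F M) != 0%N -> adim (Fobj F (Fobj F M)) != 0%N.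
Proof.
case: F_selfadjoint => phi [psi [_ _ psiK _ _]] FM_neq0.
apply: contraNneq FM_neq0 => FFM0.
set N := Fobj F M.
have hom1 : @is_hom _ _ N N (1%:M : 'M[k]_(adim N)).
  by move=> a; rewrite mul1mx mulmx1.
have hom0 : @is_hom _ _ N N (0 : 'M[k]_(adim N)).
  by move=> a; rewrite mul0mx mulmx0.
have phi10 : phi M N 1%:M = phi M N 0 := flatmx_eq FFM0 _ _.
have one_eq0 : (1%:M : 'M[k]_(adim N)) = 0.
  by rewrite -[LHS](psiK M N _ hom1) -[RHS](psiK M N _ hom0) phi10.
by rewrite -(mxrank1 k (adim N)) one_eq0 mxrank0.
Qed.

Lemma iter_Fobj_neq0 (M : amod A) m :
  adim (Fobj F M) != 0%N -> adim (iter m.+1 (Fobj F) M) != 0%N.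
Proof.
elim: m M => [|m IHm] M FM_neq0 //.
by rewrite iterSr; apply/IHm/selfadjoint_FFobj_neq0.
Qed.

End SelfadjointNonvanishing.

Theorem proposition21 (k : closedFieldType) (A : falgType k)
    (F : endofunctor A) :
  basic A -> selfadjoint F -> (exists n : nat, (0 < n)%N /\ power_zero F n) ->
  zero_functor F.
Proof.
move=> _ F_sa [[|n] [//= _ Fn0]] M.
by apply: contra_eq (Fn0 M); apply: iter_Fobj_neq0.
Qed.
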